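(* Let $f\in\mathbb Q(x)$ be a rational function with rational coefficients that is defined on $(0,1)$ and satisfies $0<f(p)<1$ for all $p\in(0,1)$. Then there exist an integer $k\ge0$ and integers $0\le d_i\le e_i$ ($i=0,\dots,k$) such that, with $d(p)=\sum_{i=0}^k d_ip^i(1-p)^{k-i}$ and $e(p)=\sum_{i=0}^k e_ip^i(1-p)^{k-i}$, one has $e(p)\neq0$ and $f(p)=d(p)/e(p)$ for all $p\in(0,1)$. *)

From HB Require Import structures.
From mathcomp Require Import all_boot all_order all_algebra.
From mathcomp Require Import reals.
Set Implicit Arguments. Unset Strict Implicit. Unset Printing Implicit Defensive.
Import Order.TTheory GRing.Theory Num.Theory.
Local Open Scope ring_scope.

Definition qeval (R : realType) (P : {poly rat}) (x : R) : R :=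
  (map_poly (fun c : rat => ratr c) P).[x].

Definition bern_sum (R : realType) (k : nat) (c : nat -> nat) (p : R) : R :=
  \sum_(i < k.+1) (c i)%:R * p ^+ i * (1 - p) ^+ (k - i).

From HB Require Import structures.
From mathcomp Require Import all_boot all_order all_algebra.
From mathcomp Require Import reals complex.
From mathcomp Require Import ring lra.
Import Order.TTheory GRing.Theory Num.Theory.
Local Open Scope ring_scope.
Set Implicit Arguments. Unset Strict Implicit. Unset Printing Implicit Defensive.

(* Write f = A / (A + B) with A = P Q and B = Q^2 - P Q, both positive on (0,1).
   A polynomial G of degree at most n that is positive on (0,1) becomes, under
   p = t / (1 + t), a polynomial H with G(p) = (1 - p)^n H(p / (1 - p)) that is
   positive on (0,oo).  By Polya's theorem some (1 + X)^N H has nonnegative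
   coefficients, and these are the coefficients of G in the Bernstein basis
   p^i (1 - p)^(k - i) of degree k = N + n.  Polya's theorem reduces, through the
   factorization of H over the reals, to the factors X + a with a >= 0 and
   (X - a)^2 + c with c > 0, which are checked by hand.  Clearing denominators
   then gives the integers d_i <= e_i. *)

Definition nonneg_coefs (R : numDomainType) (p : {poly R}) := forall i, 0 <= p`_i.

Definition polya_nonneg (R : numDomainType) (p : {poly R}) :=
  exists N, nonneg_coefs ((1 + 'X) ^+ N * p).

Lemma nonneg_coefsM (R : numDomainType) (p q : {poly R}) :
  nonneg_coefs p -> nonneg_coefs q -> nonneg_coefs (p * q).
Proof. by move=> hp hq i; rewrite coefM; apply: sumr_ge0 => j _; apply: mulr_ge0. Qed.

Lemma coef_1addX_exp (R : nzRingType) N i : ((1 + 'X : {poly R}) ^+ N)`_i = 'C(N, i)%:R.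
Proof.
elim: N i => [|N IH] [|i]; rewrite ?expr0 ?coef1 ?bin0n //.
  by rewrite exprS mulrDl mul1r coefD coefXM IH !bin0 addr0.
by rewrite exprS mulrDl mul1r coefD coefXM !IH binS natrD addrC.
Qed.

Lemma size_1addX_exp (R : nzRingType) N : size ((1 + 'X : {poly R}) ^+ N) = N.+1.
Proof. by rewrite -[1]opprK -polyCN addrC size_exp_XsubC. Qed.

Lemma nonneg_coefs_1addX_exp (R : numDomainType) N : nonneg_coefs ((1 + 'X : {poly R}) ^+ N).
Proof. by move=> i; rewrite coef_1addX_exp ler0n. Qed.

Lemma polya_nonnegM (R : numDomainType) (p q : {poly R}) :
  polya_nonneg p -> polya_nonneg q -> polya_nonneg (p * q).
Proof.
move=> [M hp] [N hq]; exists (M + N)%N.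
rewrite exprD mulrACA; exact: nonneg_coefsM.
Qed.

Lemma polya_nonnegC (R : numDomainType) (c : R) : 0 <= c -> polya_nonneg c%:P.
Proof. by move=> c_ge0; exists 0%N => i; rewrite expr0 mul1r coefC; case: eqP. Qed.

Lemma polya_nonneg_XaddC (R : numDomainType) (a : R) : 0 <= a -> polya_nonneg ('X + a%:P).
Proof.
move=> a_ge0; exists 0%N => -[|[|i]]; rewrite expr0 mul1r coefD coefX coefC //=.
- by rewrite add0r.
- by rewrite addr0 ler01.
- by rewrite addr0.
Qed.

Lemma quadratic_form_eventually_nonneg (R : realFieldType) (a c : R) : 0 < c ->
  exists M : R, forall j s, 0 <= j -> 0 <= s -> M <= j + s ->
    0 <= (j + 1) * (j + 2) - 2 * a * (j + 2) * s + (a ^+ 2 + c) * s * (s - 1).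
Proof.
move=> c_gt0; have [A A_def] : exists A, A = 4 * `|a| + (a ^+ 2 + c) by eexists.
have A_ge0 : 0 <= A by rewrite A_def; have := normr_ge0 a; have := sqr_ge0 a; lra.
pose sig := A / c; have sig_ge0 : 0 <= sig by rewrite divr_ge0 // ltW.
have sigc : sig * c = A by rewrite divfK // gt_eqF.
clearbody sig.
exists ((1 + `|a| + A) * sig + 1) => j s j_ge0 s_ge0 hM.
have a_le := ler_norm a.
(* a positive definite form (j - a s)^2 + c s^2 plus terms of lower order *)
have lower : (j - a * s) ^+ 2 + c * s ^+ 2 - A * s <=
    (j + 1) * (j + 2) - 2 * a * (j + 2) * s + (a ^+ 2 + c) * s * (s - 1).
  have : 0 <= (`|a| - a) * s by apply: mulr_ge0; lra.
  rewrite A_def; nra.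
apply: le_trans lower; have [s_ge|s_lt] := leP sig s.
  have : 0 <= c * s * (s - sig) by rewrite !mulr_ge0 ?subr_ge0 // ltW.
  rewrite -sigc; have := sqr_ge0 (j - a * s); rewrite !expr2; nra.
have as_le : a * s <= `|a| * s by rewrite ler_wpM2r.
have as_sig : `|a| * s <= `|a| * sig by rewrite ler_wpM2l // ltW.
have As_sig : A * s <= A * sig by rewrite ler_wpM2l // ltW.
have js_big : A * sig + 1 <= j - a * s by lra.
have : 0 <= (j - a * s) * (j - a * s - 1).
  by rewrite mulr_ge0 // subr_ge0; have := mulr_ge0 A_ge0 sig_ge0; lra.
have := mulr_ge0 (ltW c_gt0) (sqr_ge0 s); rewrite !expr2; nra.
Qed.

Lemma binomial_quadratic_comb (R : comNzRingType) (N j : nat) (a v : R) : (j < N)%N ->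
  (j.+1 * j.+2)%:R * ('C(N, j)%:R - 'C(N, j.+1)%:R * (2 * a) + 'C(N, j.+2)%:R * v) =
  'C(N, j)%:R * ((j%:R + 1) * (j%:R + 2) - 2 * a * (j%:R + 2) * (N - j)%:R
                 + v * (N - j)%:R * ((N - j)%:R - 1)).
Proof.
move=> lt_jN.
have nat_eq (m n : nat) : m = n -> m%:R = n%:R :> R by move->.
have s1 : (N - j.+1)%:R = (N - j)%:R - 1 :> R by rewrite subnS -subn1 natrB // subn_gt0.
have := nat_eq _ _ (mul_bin_left N j); have := nat_eq _ _ (mul_bin_left N j.+1).
rewrite !natrM s1 -[j.+2]addn2 -[j.+1]addn1 !natrD.
set x := 'C(N, j)%:R; set y := 'C(N, j + 1)%:R; set z := 'C(N, j + 2)%:R.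
set J := j%:R; set s := (N - j)%:R => rec2 rec1.
(* a combination of the recurrences (J + 1) y = s x and (J + 2) z = (s - 1) y *)
transitivity (x * ((J + 1) * (J + 2) - 2 * a * (J + 2) * s + v * s * (s - 1))
  - (2 * a * (J + 2) - v * (s - 1)) * ((J + 1) * y - s * x)
  + v * (J + 1) * ((J + 2) * z - (s - 1) * y)); first by ring.
by rewrite rec1 rec2 !subrr !mulr0 subr0 addr0.
Qed.

Lemma polya_nonneg_quadratic (R : archiRealFieldType) (a c : R) : 0 < c ->
  polya_nonneg (('X - a%:P) ^+ 2 + c%:P).
Proof.
move=> c_gt0; pose v := a ^+ 2 + c.
have v_gt0 : 0 < v by rewrite /v; have := sqr_ge0 a; lra.
have [M hM] := quadratic_form_eventually_nonneg a c_gt0.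
have ratio_ge0 : 0 <= 2 * `|a| / v by rewrite divr_ge0 ?mulr_ge0 // ltW.
have [N N_big] : exists N : nat, `|M| + 2 * `|a| / v < N%:R.
  by exists (Num.Def.archi_bound (`|M| + 2 * `|a| / v)); rewrite archi_boundP ?addr_ge0.
exists N => m.
have -> : (1 + 'X) ^+ N * (('X - a%:P) ^+ 2 + c%:P) =
    (1 + 'X) ^+ N * 'X ^+ 2 - ((1 + 'X) ^+ N * 'X) * (2 * a)%:P + (1 + 'X) ^+ N * v%:P.
  by rewrite /v polyCD polyCM polyC_exp; ring.
rewrite coefD coefB !coefMC coefMXn coefMX !coef_1addX_exp.
case: m => [|[|j]] /=.
- by rewrite bin0 mul0r subrr add0r mul1r ltW.
- rewrite bin0 bin1 mul1r sub0r addrC subr_ge0.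
  have : 2 * `|a| <= N%:R * v.
    by rewrite -ler_pdivrMr //; have := normr_ge0 M; lra.
  have := ler_norm a; lra.
rewrite subn2 /=; have [le_Nj|lt_jN] := leqP N j.
  rewrite (@bin_small N j.+1) ?(@bin_small N j.+2) ?ltnS ?(leqW le_Nj) //.
  by rewrite mul0r subr0 mul0r addr0.
have jj_gt0 : 0 < (j.+1 * j.+2)%:R :> R by rewrite ltr0n muln_gt0.
rewrite -(pmulr_rge0 _ jj_gt0) (binomial_quadratic_comb _ _ lt_jN).
apply: mulr_ge0; first exact: ler0n.
have sum_N : M <= j%:R + (N - j)%:R.
  rewrite -natrD (subnKC (ltnW lt_jN)).
  have := ler_norm M; lra.
exact: hM (ler0n _ _) (ler0n _ _) sum_N.
Qed.

Section RealFactorization.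
Local Open Scope complex_scope.

Lemma dvdp_quadratic_of_complex_root (R : rcfType) (H : {poly R}) (a b : R) :
  b != 0 -> root (map_poly (real_complex R) H) (a +i* b) ->
  ('X - a%:P) ^+ 2 + (b ^+ 2)%:P %| H.
Proof.
move=> b_neq0 root_z; set f := real_complex R.
have conj_root : root (map_poly f H) (a -i* b).
  have map_conj : map_poly conjc (map_poly f H) = map_poly f H.
    by rewrite -map_poly_comp; apply: eq_map_poly => x /=; exact: conjc_real.
  by rewrite -[a -i* b]/((a +i* b)^*) -complex_root_conj map_conj.
have z_eq : a +i* b = f a + 'i * f b.
  by apply/eqP; rewrite eq_complex /=; apply/andP; split; apply/eqP; ring.
have zbar_eq : a -i* b = f a - 'i * f b.
  by apply/eqP; rewrite eq_complex /=; apply/andP; split; apply/eqP; ring.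
have ii : 'i%:P * 'i%:P = -1 :> {poly R[i]} by rewrite -polyCM -expr2 sqr_i polyCN.
have map_q : map_poly f (('X - a%:P) ^+ 2 + (b ^+ 2)%:P) =
    \prod_(z <- [:: a +i* b; a -i* b]) ('X - z%:P).
  rewrite big_cons big_seq1 z_eq zbar_eq rmorphD rmorphXn rmorphB /= map_polyX.
  rewrite !map_polyC /= rmorphXn !polyCD !polyCN !polyCM.
  have factor (x y u i : {poly R[i]}) :
      i * i = -1 -> (x - y) ^+ 2 + u * u = (x - (y + i * u)) * (x - (y - i * u)).
    move=> i2; transitivity ((x - y) ^+ 2 - (i * i) * (u * u)); last by ring.
    by rewrite i2; ring.
  exact: factor.
rewrite -(dvdp_map f) map_q uniq_roots_dvdp ?uniq_rootsE /= ?root_z ?conj_root //.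
rewrite inE andbT eq_complex /= eqxx /=; apply: contra b_neq0 => /eqP b_eq.
by apply/eqP; lra.
Qed.

Lemma real_poly_root_or_quadratic_factor (R : rcfType) (H : {poly R}) : (1 < size H)%N ->
  (exists a, root H a) \/ exists a c, 0 < c /\ ('X - a%:P) ^+ 2 + c%:P %| H.
Proof.
move=> size_gt1; set f := real_complex R.
have [[a b] root_z] : exists z, root (map_poly f H) z.
  by apply/closed_rootP; rewrite size_map_poly neq_ltn size_gt1 orbT.
have [b0|b_neq0] := eqVneq b 0.
  by left; exists a; rewrite -(fmorph_root f); rewrite b0 in root_z.
right; exists a, (b ^+ 2); split; first by rewrite exprn_even_gt0.
exact: dvdp_quadratic_of_complex_root.
Qed.

End RealFactorization.

Lemma pos_poly_polya_factor (R : archiRcfType) (H : {poly R}) : (1 < size H)%N ->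
  (forall t, 0 < t -> 0 < H.[t]) ->
  exists q, [/\ q %| H, (1 < size q)%N, forall t, 0 < t -> 0 < q.[t] & polya_nonneg q].
Proof.
move=> size_gt1 H_pos.
case: (real_poly_root_or_quadratic_factor size_gt1) => [[a root_a]|[a [c [c_gt0 dvd_q]]]].
  have a_le0 : a <= 0.
    by rewrite leNgt; apply/negP => /H_pos; rewrite (rootP root_a) ltxx.
  exists ('X - a%:P); split; rewrite ?dvdp_XsubCl ?size_XsubC //.
    by move=> t t_gt0; rewrite hornerXsubC subr_gt0 (le_lt_trans a_le0).
  by rewrite -polyCN; apply: polya_nonneg_XaddC; rewrite oppr_ge0.
exists (('X - a%:P) ^+ 2 + c%:P); split => //.
- rewrite size_polyDl size_exp_XsubC //.
  by rewrite (leq_ltn_trans (size_polyC_leq1 _)).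
- by move=> t _; rewrite !hornerE ltr_wpDl // sqr_ge0.
- exact: polya_nonneg_quadratic.
Qed.

Theorem polya_nonneg_pos (R : archiRcfType) (H : {poly R}) :
  (forall t, 0 < t -> 0 < H.[t]) -> polya_nonneg H.
Proof.
elim: {H}(size H) {-2}H (leqnn (size H)) => [|n IH] H size_H H_pos.
  move: size_H (H_pos 1 ltr01); rewrite leqn0 size_poly_eq0 => /eqP ->.
  by rewrite horner0 ltxx.
have [size_le1|size_gt1] := leqP (size H) 1.
  rewrite (size1_polyC size_le1); apply: polya_nonnegC.
  by have := H_pos 1 ltr01; rewrite [in H.[_]](size1_polyC size_le1) hornerC => /ltW.
have [q [dvd_q size_q q_pos q_polya]] := pos_poly_polya_factor size_gt1 H_pos.
have q_neq0 : q != 0 by rewrite -size_poly_gt0 (ltn_trans _ size_q).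
rewrite -(divpK dvd_q); apply: polya_nonnegM q_polya; apply: IH.
  by rewrite size_divp // leq_subLR (leq_trans size_H) // -add1n leq_add2r -subn1 subn_gt0.
move=> t t_gt0; have := H_pos t t_gt0.
by rewrite -{1}(divpK dvd_q) hornerM pmulr_lgt0 // q_pos.
Qed.

Definition homogenize (R : nzRingType) (G : {poly R}) (n : nat) : {poly R} :=
  \sum_(j < n.+1) G`_j *: ('X ^+ j * (1 + 'X) ^+ (n - j)).

Lemma map_homogenize (R S : nzRingType) (f : {rmorphism R -> S}) (G : {poly R}) n :
  map_poly f (homogenize G n) = homogenize (map_poly f G) n.
Proof.
rewrite rmorph_sum; apply: eq_bigr => j _.
by rewrite /= map_polyZ rmorphM !rmorphXn rmorphD rmorph1 /= map_polyX coef_map.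
Qed.

Lemma size_homogenize (R : nzRingType) (G : {poly R}) n : (size (homogenize G n) <= n.+1)%N.
Proof.
rewrite /homogenize; elim/big_ind: _ => [|p q|j _]; first by rewrite size_poly0.
  by move=> p_le q_le; rewrite (leq_trans (size_polyD _ _)) // geq_max p_le.
rewrite (leq_trans (size_scale_leq _ _)) // (leq_trans (size_polyMleq _ _)) //.
by rewrite size_polyXn size_1addX_exp addSn /= addnS subnKC // -ltnS.
Qed.

Lemma horner_homogenize (F : fieldType) (G : {poly F}) n (p : F) :
  p != 1 -> (size G <= n.+1)%N -> (1 - p) ^+ n * (homogenize G n).[p / (1 - p)] = G.[p].
Proof.
move=> p_neq1 size_G; have q_neq0 : 1 - p != 0 by rewrite subr_eq0 eq_sym.
rewrite horner_sum mulr_sumr (horner_coef_wide _ size_G); apply: eq_bigr => j _.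
have le_jn : (j <= n)%N by rewrite -ltnS.
have to_p : (1 - p) * (p / (1 - p)) = p by field.
have to_1 : (1 - p) * (1 + p / (1 - p)) = 1 by field.
rewrite hornerZ hornerM hornerXn horner_exp hornerD hornerX hornerC -{1}(subnKC le_jn) exprD.
transitivity (G`_j * (((1 - p) * (p / (1 - p))) ^+ j * ((1 - p) * (1 + p / (1 - p))) ^+ (n - j))).
  by rewrite !exprMn; ring.
by rewrite to_p to_1 expr1n mulr1.
Qed.

Lemma bern_horner (F : fieldType) (C : {poly F}) k (p : F) :
  p != 1 -> (size C <= k.+1)%N ->
  \sum_(i < k.+1) C`_i * p ^+ i * (1 - p) ^+ (k - i) = (1 - p) ^+ k * C.[p / (1 - p)].
Proof.
move=> p_neq1 size_C; have q_neq0 : 1 - p != 0 by rewrite subr_eq0 eq_sym.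
rewrite (horner_coef_wide _ size_C) mulr_sumr; apply: eq_bigr => i _.
have le_ik : (i <= k)%N by rewrite -ltnS.
have split_k : (1 - p) ^+ k = (1 - p) ^+ i * (1 - p) ^+ (k - i) by rewrite -exprD subnKC.
rewrite split_k expr_div_n.
by field; rewrite expf_neq0.
Qed.

Lemma bern_expansion (F : fieldType) (G : {poly F}) n k (p : F) :
  p != 1 -> (size G <= n.+1)%N -> (n <= k)%N ->
  \sum_(i < k.+1) ((1 + 'X) ^+ (k - n) * homogenize G n)`_i * p ^+ i * (1 - p) ^+ (k - i)
  = G.[p].
Proof.
move=> p_neq1 size_G le_nk; have q_neq0 : 1 - p != 0 by rewrite subr_eq0 eq_sym.
rewrite bern_horner //; last first.
  rewrite (leq_trans (size_polyMleq _ _)) // size_1addX_exp addSn /=.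
  by rewrite (leq_trans (leq_add (leqnn _) (size_homogenize G n))) // addnS subnK.
rewrite hornerM horner_exp hornerD hornerX hornerC -{1}(subnK le_nk) exprD.
have to_1 : (1 - p) * (1 + p / (1 - p)) = 1 by field.
transitivity (((1 - p) * (1 + p / (1 - p))) ^+ (k - n) *
              ((1 - p) ^+ n * (homogenize G n).[p / (1 - p)])).
  by rewrite exprMn; ring.
by rewrite to_1 expr1n mul1r horner_homogenize.
Qed.

Lemma homogenize_pos (R : realFieldType) (G : {poly R}) n : (size G <= n.+1)%N ->
  (forall p, 0 < p < 1 -> 0 < G.[p]) -> forall t, 0 < t -> 0 < (homogenize G n).[t].
Proof.
move=> size_G G_pos t t_gt0; pose p := t / (1 + t).
have t1_gt0 : 0 < 1 + t by lra.
have p_gt0 : 0 < p by rewrite divr_gt0.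
have p_lt1 : p < 1 by rewrite ltr_pdivrMr // mul1r; lra.
have to_t : p / (1 - p) = t by rewrite /p; field; rewrite gt_eqF //; lra.
have := G_pos p; rewrite p_gt0 p_lt1 => /(_ isT).
rewrite -(horner_homogenize (negbT (lt_eqF p_lt1)) size_G) to_t pmulr_rgt0 //.
by rewrite exprn_gt0 // subr_gt0.
Qed.

Lemma nonneg_coefs_map_ratr (R : numFieldType) (C : {poly rat}) :
  nonneg_coefs (map_poly (fun c : rat => ratr c : R) C) -> nonneg_coefs C.
Proof. by move=> C_ge0 i; have := C_ge0 i; rewrite coef_map ler0q. Qed.

Lemma denq_mulr_nat (x : rat) : 0 <= x -> (`|denq x|%N)%:R * x \is a Num.nat.
Proof.
move=> x_ge0; rewrite natr_absz gtr0_norm ?denq_gt0 // mulrC -numqE natrEint rpred_int /=.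
by rewrite numqE mulr_ge0 // ler0z ltW ?denq_gt0.
Qed.

Lemma rat_poly_common_den (C : {poly rat}) : nonneg_coefs C ->
  exists2 D : nat, (0 < D)%N & forall i, D%:R * C`_i \is a Num.nat.
Proof.
move=> C_ge0; exists (\prod_(i < size C) `|denq C`_i|%N).
  by rewrite prodn_gt0 // => i; rewrite absz_gt0 denq_neq0.
move=> i; have [lt_i|le_i] := ltnP i (size C); last by rewrite nth_default ?mulr0.
rewrite (bigD1 (Ordinal lt_i)) //= natrM mulrAC rpredM ?rpred_nat //.
exact: denq_mulr_nat.
Qed.

Lemma bern_sumD (R : realType) k (c d : nat -> nat) (p : R) :
  bern_sum k (fun i => c i + d i)%N p = bern_sum k c p + bern_sum k d p.
Proof. by rewrite /bern_sum -big_split; apply: eq_bigr => i _; rewrite natrD !mulrDl. Qed.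

Lemma bern_sumMn (R : realType) k m (c : nat -> nat) (p : R) :
  bern_sum k (fun i => m * c i)%N p = m%:R * bern_sum k c p.
Proof. by rewrite /bern_sum mulr_sumr; apply: eq_bigr => i _; rewrite natrM !mulrA. Qed.

Lemma pos_bern_sum (R : realType) (G : {poly rat}) :
  (forall p : R, 0 < p < 1 -> 0 < qeval G p) ->
  exists k0, forall k, (k0 <= k)%N -> exists2 D : nat, (0 < D)%N &
    exists c, forall p : R, 0 < p < 1 -> bern_sum k c p = D%:R * qeval G p.
Proof.
move=> G_pos; pose n := size G; pose Gr := map_poly (fun c : rat => ratr c : R) G.
have size_Gr : (size Gr <= n.+1)%N by rewrite size_map_poly.
have [N hN] := polya_nonneg_pos (homogenize_pos size_Gr G_pos).
exists (N + n)%N => k le_k.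
have le_nk : (n <= k)%N by rewrite (leq_trans (leq_addl _ _) le_k).
pose C := (1 + 'X) ^+ (k - n) * homogenize G n.
have map_C : map_poly (fun c : rat => ratr c : R) C = (1 + 'X) ^+ (k - n) * homogenize Gr n.
  by rewrite rmorphM rmorphXn rmorphD rmorph1 /= map_polyX map_homogenize.
have C_ge0 : nonneg_coefs C.
  have le_N : (N <= k - n)%N by rewrite -(leq_add2r n) subnK.
  rewrite /C -(subnK le_N) exprD -mulrA.
  apply: nonneg_coefsM (nonneg_coefs_1addX_exp _ _) _; apply: (@nonneg_coefs_map_ratr R).
  by rewrite rmorphM rmorphXn rmorphD rmorph1 /= map_polyX map_homogenize.
have [D D_gt0 D_nat] := rat_poly_common_den C_ge0.
exists D => //; exists (fun i => Num.truncn (D%:R * C`_i)) => p /andP [p_gt0 p_lt1].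
rewrite /bern_sum /qeval -/Gr -(bern_expansion _ size_Gr le_nk) ?lt_eqF // mulr_sumr.
apply: eq_bigr => i _; rewrite -map_C coef_map.
have cast : (Num.truncn (D%:R * C`_i))%:R = D%:R * ratr C`_i :> R.
  by rewrite -[LHS](ratr_nat R) truncnK // rmorphM rmorph_nat.
by rewrite cast -!mulrA.
Qed.

Unset Implicit Arguments.
Theorem lemma2p7 (R : realType) (P Q : {poly rat})
  (hQ : Q != 0) (hcop : coprimep P Q)
  (hdef : forall p : R, 0 < p < 1 -> qeval Q p != 0)
  (hf : forall p : R, 0 < p < 1 ->
          0 < qeval P p / qeval Q p < 1) :
  exists (k : nat) (d e : nat -> nat),
    (forall i, (i <= k)%N -> (d i <= e i)%N) /\
    forall p : R, 0 < p < 1 ->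
      bern_sum k e p != 0 /\
      qeval P p / qeval Q p = bern_sum k d p / bern_sum k e p.
Proof.
have qevalM (X Y : {poly rat}) (p : R) : qeval (X * Y) p = qeval X p * qeval Y p.
  by rewrite /qeval rmorphM hornerM.
have qevalB (X Y : {poly rat}) (p : R) : qeval (X - Y) p = qeval X p - qeval Y p.
  by rewrite /qeval rmorphB hornerD hornerN.
pose A := P * Q; pose B := Q * Q - P * Q.
have sqrQ_gt0 (p : R) : 0 < p < 1 -> 0 < qeval Q p * qeval Q p.
  by move=> p01; rewrite -expr2 exprn_even_gt0 //= hdef.
have A_pos (p : R) : 0 < p < 1 -> 0 < qeval A p.
  move=> p01; have /andP [f_gt0 _] := hf p p01; have Q_neq0 := hdef p p01.
  have -> : qeval A p = qeval P p / qeval Q p * (qeval Q p * qeval Q p).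
    by rewrite qevalM; field.
  by rewrite mulr_gt0 ?sqrQ_gt0.
have B_pos (p : R) : 0 < p < 1 -> 0 < qeval B p.
  move=> p01; have /andP [_ f_lt1] := hf p p01; have Q_neq0 := hdef p p01.
  have -> : qeval B p = (1 - qeval P p / qeval Q p) * (qeval Q p * qeval Q p).
    by rewrite qevalB !qevalM; field.
  by rewrite mulr_gt0 ?subr_gt0 ?sqrQ_gt0.
have [kA hA] := pos_bern_sum A_pos; have [kB hB] := pos_bern_sum B_pos.
pose k := maxn kA kB.
have [DA DA_gt0 [cA bern_A]] := hA k (leq_maxl _ _).
have [DB DB_gt0 [cB bern_B]] := hB k (leq_maxr _ _).
exists k, (fun i => DB * cA i)%N, (fun i => DB * cA i + DA * cB i)%N.
split=> [i _|p p01]; first exact: leq_addr.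
have [DA_neq0 DB_neq0] : DA%:R != 0 :> R /\ DB%:R != 0 :> R.
  by rewrite !pnatr_eq0 -!lt0n.
have Q_neq0 := hdef p p01.
have bern_e : bern_sum k (fun i => DB * cA i + DA * cB i)%N p =
    DB%:R * DA%:R * (qeval Q p * qeval Q p).
  rewrite bern_sumD !bern_sumMn bern_A ?bern_B // /A /B qevalB !qevalM; ring.
split; first by rewrite bern_e !mulf_neq0.
rewrite bern_e bern_sumMn bern_A // /A qevalM.
by field; rewrite Q_neq0 DA_neq0 DB_neq0.
Qed.
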